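(* Let $2\leq m<n$ be integers. Then $$\textup{res}(\Psi_m(x),\Psi_n(x))=\textup{res}(\Phi_m(x),\Phi_n(x)).$$
   Context: The Fibonacci polynomials are defined by $F_1(x)=1$, $F_2(x)=x$, and $F_n(x)=xF_{n-1}(x)+F_{n-2}(x)$ for $n\geq 3$. For $n\geq 2$, the $n$-th fibotomic polynomial $\Psi_n(x)\in\mathbb{Z}[x]$ is the product of the monic irreducible factors of $F_n(x)$ which are not factors of $F_k(x)$ for any $k<n$; also $\Psi_1(x)=1$. For $n\ge2$, $\Psi_n$ is monic of degree $\varphi(n)$ (Euler's totient). $\Phi_n(x)$ is the $n$-th cyclotomic polynomial. For monic polynomials $f,g$ with roots $a_1,\dots,a_r$ and $b_1,\dots,b_s$, the resultant is $\textup{res}(f,g)=\prod_{i,j}(a_i-b_j)$. *)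

From HB Require Import structures.
From mathcomp Require Import all_boot all_order all_algebra all_field.
From Stdlib Require Import ClassicalEpsilon.
Set Implicit Arguments. Unset Strict Implicit. Unset Printing Implicit Defensive.
Import GRing.Theory Num.Theory.
Local Open Scope ring_scope.

(* Fibonacci polynomials in Z[x]: F_0 = 0, F_1 = 1, F_{n+2} = x F_{n+1} + F_n
   (so F_2 = x, matching the paper). *)
Fixpoint fibpoly (n : nat) : {poly int} :=
  match n with
  | 0 => 0
  | 1 => 1
  | (k.+1 as n').+1 => 'X * fibpoly n' + fibpoly k
  end.

Definition dvdZx (q p : {poly int}) : Prop := exists r, p = q * r.
Definition irredZx (q : {poly int}) : Prop :=
  q != 0 /\ q \isn't a GRing.unit /\
  forall a b : {poly int}, q = a * b -> a \is a GRing.unit \/ b \is a GRing.unit.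

Definition fibotomic_factors (n : nat) (s : seq {poly int}) : Prop :=
  uniq s /\ forall q : {poly int}, q \in s <->
    [/\ q \is monic, irredZx q, dvdZx q (fibpoly n) &
        forall k : nat, (1 <= k < n)%N -> ~ dvdZx q (fibpoly k)].

Definition fibotomic (n : nat) : {poly int} :=
  if (n <= 1)%N then 1
  else \prod_(q <- epsilon (inhabits [::]) (fibotomic_factors n)) q.

Definition rootsC (p : {poly int}) : seq algC :=
  sval (closed_field_poly_normal (map_poly intr p : {poly algC})).

(* resultant of (monic) polynomials: prod_{i,j} (a_i - b_j) *)
Definition resC (f g : {poly int}) : algC :=
  \prod_(a <- rootsC f) \prod_(b <- rootsC g) (a - b).

From HB Require Import structures.
From mathcomp Require Import all_boot all_order all_algebra all_field.
From mathcomp Require Import ring zify.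
From Stdlib Require Import ClassicalEpsilon.
Set Implicit Arguments. Unset Strict Implicit. Unset Printing Implicit Defensive.
Import GRing.Theory Num.Theory.
Local Open Scope ring_scope.

(* Every a in algC is a = w - w^-1 for the roots w, -w^-1 of t (a - t) = -1.
   Binet's formula (w - c) F_n(w + c) = w^n - c^n (w c = -1) shows that a is a
   root of F_n iff u = -w^2 is an n-th root of unity other than 1; hence the
   new roots of F_n, which are the roots of Psi_n, are the a for which -w^2 is
   a primitive n-th root of unity, and they are simple.  The roots of Phi_n
   are the primitive n-th roots u themselves.  Lifting a root a of Psi_n to
   its two roots w, -w^-1, or a root u of Phi_n to its square roots +-sqrt(-u),
   produces in both cases the set of v with -v^2 primitive of order n.
   Computing the double product of differences over these lifts in two ways
   gives res(Psi_m, Psi_n)^2 = res(Phi_m, Phi_n)^2 (the degree of Psi_n being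
   even).  Finally both resultants are nonnegative reals: the roots of Psi_n
   are stable under a -> -a = conj a and those of Phi_n under conjugation,
   and grouping conjugate factors turns each product into one of squared
   moduli. *)

Notation pZtoC p := (map_poly intr p : {poly algC}).

Lemma intrC_inj : injective (intr : int -> algC).
Proof. by move=> a b /eqP; rewrite eqr_int => /eqP. Qed.

Lemma size_pZtoC (p : {poly int}) : size (pZtoC p) = size p.
Proof. by rewrite size_map_inj_poly //; exact: intrC_inj. Qed.

Lemma lead_pZtoC (p : {poly int}) : lead_coef (pZtoC p) = (lead_coef p)%:~R.
Proof. by rewrite lead_coef_map_inj //; exact: intrC_inj. Qed.

Lemma rootsC_spec (p : {poly int}) :
  pZtoC p = lead_coef (pZtoC p) *: \prod_(z <- rootsC p) ('X - z%:P).
Proof. exact: (svalP (closed_field_poly_normal _)). Qed.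

Lemma rootsC_monic (p : {poly int}) : p \is monic ->
  pZtoC p = \prod_(z <- rootsC p) ('X - z%:P).
Proof. by move=> mp; rewrite {1}rootsC_spec lead_pZtoC (monicP mp) scale1r. Qed.

Lemma rootsC_perm (p : {poly int}) (l : seq algC) : p \is monic ->
  pZtoC p = \prod_(z <- l) ('X - z%:P) -> perm_eq (rootsC p) l.
Proof. by move=> mp E; apply: prod_XsubC_eq; rewrite -rootsC_monic. Qed.

Lemma mem_rootsC (p : {poly int}) x : p \is monic ->
  (x \in rootsC p) = root (pZtoC p) x.
Proof. by move=> mp; rewrite rootsC_monic // root_prod_XsubC. Qed.

Notation fibR R n := (map_poly intr (fibpoly n) : {poly R}).

Lemma fibSS k : fibpoly k.+2 = 'X * fibpoly k.+1 + fibpoly k.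
Proof. by []. Qed.

Lemma fib_size_monic n : size (fibpoly n.+1) = n.+1 /\ fibpoly n.+1 \is monic.
Proof.
suff: (size (fibpoly n.+1) = n.+1 /\ fibpoly n.+1 \is monic) /\
      (size (fibpoly n.+2) = n.+2 /\ fibpoly n.+2 \is monic) by case.
elim: n => [|n [[s1 m1] [s2 m2]]].
  by rewrite fibSS /= mulr1 addr0 size_poly1 size_polyX monic1 monicX.
have sX : size ('X * fibpoly n.+2) = n.+3.
  by rewrite mulrC size_mulX ?s2 // -size_poly_eq0 s2.
have lt : (size (fibpoly n.+1) < size ('X * fibpoly n.+2)%R)%N by rewrite sX s1.
split=> //; rewrite fibSS; split; first by rewrite size_polyDl.
by rewrite monicE lead_coefDl // mulrC lead_coefMX.
Qed.

Section FibonacciRing.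
Variable R : comNzRingType.

Lemma fibR_hornerSS k x :
  (fibR R k.+2).[x] = x * (fibR R k.+1).[x] + (fibR R k).[x].
Proof.
by rewrite fibSS rmorphD rmorphM /= map_polyX hornerD mulrC hornerMX mulrC.
Qed.

Lemma fibR_horner0 x : (fibR R 0).[x] = 0.
Proof. by rewrite /= map_poly0 horner0. Qed.

Lemma fibR_horner1 x : (fibR R 1).[x] = 1.
Proof. by rewrite /= rmorph1 hornerC. Qed.

Lemma fib_binet n (w c : R) : w * c = -1 ->
  (w - c) * (fibR R n).[w + c] = w ^+ n - c ^+ n.
Proof.
move=> wc.
suff: (w - c) * (fibR R n).[w + c] = w ^+ n - c ^+ n /\
      (w - c) * (fibR R n.+1).[w + c] = w ^+ n.+1 - c ^+ n.+1 by case.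
elim: n => [|n [IH1 IH2]].
  by rewrite fibR_horner0 fibR_horner1 !expr0 expr1 subrr mulr0 mulr1.
split=> //; rewrite fibR_hornerSS mulrDr mulrCA IH2 IH1.
have -> : (w + c) * (w ^+ n.+1 - c ^+ n.+1) + (w ^+ n - c ^+ n) =
  w ^+ n.+2 - c ^+ n.+2 + (w * c + 1) * (w ^+ n - c ^+ n).
  by rewrite !exprS; ring.
by rewrite wc addNr mul0r addr0.
Qed.

(* The degenerate case w = c of Binet's formula: F_{n+1}(2w) = (n+1) w^n. *)
Lemma fib_double n (w : R) : w * w = -1 ->
  (fibR R n.+1).[w + w] = n.+1%:R * w ^+ n.
Proof.
move=> ww.
suff: (fibR R n.+1).[w + w] = n.+1%:R * w ^+ n /\
      (fibR R n.+2).[w + w] = n.+2%:R * w ^+ n.+1 by case.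
elim: n => [|n [IH1 IH2]].
  rewrite fibR_hornerSS !fibR_horner1 fibR_horner0.
  by rewrite mulr1 addr0 expr0 expr1 mulr1 -mulr2n mulr_natl.
split=> //; rewrite fibR_hornerSS IH2 IH1.
have -> : (w + w) * (n.+2%:R * w ^+ n.+1) + n.+1%:R * w ^+ n =
   n.+3%:R * w ^+ n.+2 + (w * w + 1) * (n.+1%:R * w ^+ n).
  by rewrite !exprS -!natr1; ring.
by rewrite ww addNr mul0r addr0.
Qed.

End FibonacciRing.

Notation fibC n := (fibR algC n).

Lemma quad_roots (R : idomainType) (w c t : R) : w * c = -1 ->
  t * (w + c - t) = -1 -> t = w \/ t = c.
Proof.
move=> wc ht; have : (t - w) * (t - c) = 0.
  have -> : (t - w) * (t - c) = w * c - t * (w + c - t) by ring.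
  by rewrite wc ht subrr.
by move/eqP; rewrite mulf_eq0 !subr_eq0 => /orP[/eqP|/eqP]; [left|right].
Qed.

Lemma mulN1_neq0 (R : nzRingType) (w c : R) : w * c = -1 -> (w != 0) && (c != 0).
Proof.
move=> wc; apply/andP; split; apply: contra_eq_neq wc => ->;
  by rewrite ?mul0r ?mulr0 eq_sym oppr_eq0 oner_eq0.
Qed.

Lemma root_fib n x w : (0 < n)%N -> w * (x - w) = -1 ->
  root (fibC n) x = ((- w ^+ 2) ^+ n == 1) && (- w ^+ 2 != 1).
Proof.
move=> n0; set c := x - w => wc.
have xE : x = w + c by rewrite /c addrC subrK.
have /andP[w0 c0] := mulN1_neq0 wc.
have ucE : - w ^+ 2 * c = w by rewrite expr2 mulNr -mulrA wc mulrN1 opprK.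
have u1E : (- w ^+ 2 == 1) = (w == c).
  apply/eqP/eqP => [u1 | wcE]; first by rewrite -ucE u1 mul1r.
  by rewrite expr2 {2}wcE wc opprK.
rewrite u1E /root xE; case: (eqVneq w c) => [wcE | wnc] /=.
  have ww : w * w = -1 by rewrite {2}wcE.
  rewrite andbF -wcE; apply/negbTE; case: n n0 => // n _.
  by rewrite fib_double // mulf_neq0 ?pnatr_eq0 // expf_neq0.
have wc0 : w - c != 0 by rewrite subr_eq0.
have := mulf_eq0 (w - c) (fibC n).[w + c]; rewrite (negbTE wc0) andbT => /= <-.
rewrite fib_binet // subr_eq0.
by rewrite -{1}ucE exprMn -{2}[c ^+ n]mul1r (inj_eq (mulIf (expf_neq0 n c0))).
Qed.

(* F_{n+1} has n distinct roots over algC: with z a primitive 2(n+1)-th root of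
   unity, the numbers w_k - w_k^-1 for w_k = i z^k, 1 <= k <= n, are roots. *)
Lemma uniq_rootsC_fib n : uniq (rootsC (fibpoly n.+1)).
Proof.
set N := n.+1; have [_ mN] := fib_size_monic n.
have [z pz] := @C_prim_root_exists (2 * N)%N isT.
pose w k : algC := 'i * z ^+ k.
have w0 k : w k != 0 by rewrite /w mulf_neq0 ?neq0Ci ?expf_neq0 ?(prim_root_eq0 pz).
have wc k : w k * (w k - (w k)^-1 - w k) = -1.
  by rewrite addrAC subrr add0r mulrN divff.
have zinj i j : z ^+ i = z ^+ j -> (i < 2 * N)%N -> (j < 2 * N)%N -> i = j.
  move=> /eqP; rewrite (eq_prim_root_expr pz) => /eqP + hi hj.
  by rewrite !modn_small.
have wsq k : - w k ^+ 2 = z ^+ (2 * k).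
  by rewrite exprMn sqrCi mulN1r opprK -exprM mulnC.
pose S := [seq w k - (w k)^-1 | k <- iota 1 n].
have memS : {subset S <= rootsC (fibpoly N)}.
  move=> x /mapP[k]; rewrite mem_iota => /andP[k1 k2] ->.
  rewrite mem_rootsC // (root_fib _ (wc k)) // wsq -exprM.
  rewrite -(expr0 z) !(eq_prim_root_expr pz) mod0n mulnAC modnMr modn_small /=; lia.
have uS : uniq S.
  rewrite map_inj_in_uniq ?iota_uniq // => j k.
  rewrite !mem_iota => /andP[j1 j2] /andP[k1 k2] E.
  have wNj : w j * - (w j)^-1 = -1 by rewrite mulrN divff.
  have wkj : w k * w j = - z ^+ (k + j).
    by rewrite /w mulrACA -expr2 sqrCi mulN1r exprD.
  have wck : w k * (w j - (w j)^-1 - w k) = -1 by rewrite E wc.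
  have [/(mulfI (@neq0Ci algC))/zinj | wkE] := quad_roots wNj wck.
    lia.
  rewrite wkE mulNr mulVf // in wkj.
  by move/oppr_inj: wkj; rewrite -(expr0 z) => /esym/zinj; lia.
apply: (leq_size_uniq uS memS).
rewrite size_map size_iota -ltnS -(size_prod_XsubC _ id) -rootsC_monic //.
by rewrite size_pZtoC (fib_size_monic n).1.
Qed.

Lemma prim_root_inv (R : comNzRingType) k (u v : R) : u * v = 1 ->
  k.-primitive_root u -> k.-primitive_root v.
Proof.
move=> uv pu; have k0 := prim_order_gt0 pu.
have -> : v = u ^+ k.-1.
  by rewrite -[v]mul1r -(prim_expr_order pu) -(prednK k0) exprS mulrAC uv mul1r.
rewrite (prim_root_exp_coprime _ pu); case: k k0 {pu} => // k _ /=.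
exact: coprimenS.
Qed.

Lemma prim_root_neq0 (R : nzRingType) k (u : R) : k.-primitive_root u -> u != 0.
Proof. by move=> pu; rewrite (prim_root_eq0 pu) -lt0n (prim_order_gt0 pu). Qed.

Lemma prim_rootE (R : nzRingType) n (u : R) : (0 < n)%N ->
  n.-primitive_root u =
    (u ^+ n == 1) && [forall k : 'I_n, (0 < k)%N ==> (u ^+ k != 1)].
Proof.
move=> n0; apply/idP/andP => [pu | [un /forallP hk]].
  split; first by rewrite prim_expr_order.
  apply/forallP => k; apply/implyP => k0; rewrite -(prim_order_dvd pu).
  by apply: contraTN (ltn_ord k) => /(dvdn_leq k0); rewrite leqNgt.
rewrite /primitive_root_of_unity n0 /=; apply/forallP => i; rewrite unity_rootE.
case: (eqVneq i.+1 n) => [-> | ne]; first by rewrite un.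
have lt : (i.+1 < n)%N by rewrite ltn_neqAle ne ltn_ord.
by have /implyP/(_ isT)/negbTE -> := hk (Ordinal lt).
Qed.

(* The principal root w of t^2 - a t - 1 = 0, i.e. w (a - w) = -1, so that
   a = w - w^-1; the other root is a - w. *)
Definition wroot (a : algC) : algC := (a + sqrtC (a ^+ 2 + 4)) / 2.

Lemma wrootP a : wroot a * (a - wroot a) = -1.
Proof.
rewrite /wroot; set s := sqrtC _; have hs : s ^+ 2 = a ^+ 2 + 4 by rewrite sqrtCK.
have h2 : (2 : algC) != 0 by rewrite pnatr_eq0.
have -> : (a + s) / 2 * (a - (a + s) / 2) = (a ^+ 2 - s ^+ 2) / 4 by field.
by rewrite hs; field.
Qed.

Definition fibprim k (a : algC) : bool := k.-primitive_root (- wroot a ^+ 2).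

Definition wother (a : algC) : algC := a - wroot a.

Lemma wotherP a : wother a * (a - wother a) = -1.
Proof. by rewrite /wother subKr mulrC wrootP. Qed.

Lemma wroot_cases a t : t * (a - t) = -1 -> t = wroot a \/ t = wother a.
Proof.
move=> ht; apply: (quad_roots (wrootP a)).
by rewrite [wroot a + _]addrC subrK.
Qed.

(* Either root t of t (a - t) = -1 may be used: the two values of -t^2 are
   inverse to each other. *)
Lemma fibprimE k a t : t * (a - t) = -1 ->
  fibprim k a = k.-primitive_root (- t ^+ 2).
Proof.
rewrite /fibprim => /wroot_cases [] -> //.
have inv : (- wroot a ^+ 2) * (- wother a ^+ 2) = 1.
  by rewrite mulrNN -exprMn wrootP sqrrN expr1n.
apply/idP/idP; first exact: prim_root_inv.
by apply: prim_root_inv; rewrite mulrC.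
Qed.

Definition newroot n (x : algC) : bool :=
  root (fibC n) x && [forall k : 'I_n, (0 < k)%N ==> ~~ root (fibC k) x].

Lemma newroot_fibprim n x : (2 <= n)%N -> newroot n x = fibprim n x.
Proof.
move=> n2; have hw := wrootP x.
rewrite /fibprim prim_rootE; last by lia.
rewrite /newroot (root_fib _ hw); last by lia.
set u := - wroot x ^+ 2.
apply/andP/andP => [[/andP[-> u1] /forallP hk] | [un /forallP hk]].
  split=> //; apply/forallP => k; apply/implyP => k0.
  by have := hk k; rewrite k0 /= (root_fib _ hw) // negb_and u1 orbF.
have u1 : u != 1 by have := hk (Ordinal (n2 : (1 < n)%N)); rewrite expr1.
split; first by rewrite un.
apply/forallP => k; apply/implyP => k0.
by rewrite (root_fib _ hw) // negb_and (implyP (hk k) k0).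
Qed.

Lemma minCpoly_dvd b (f : {poly int}) : root (pZtoC f) b -> minCpoly b %| pZtoC f.
Proof.
have [p [Dp _] rt] := minCpolyP b.
have E : pZtoC f = map_poly ratr (map_poly intr f : {poly rat}).
  by rewrite -map_poly_comp; apply: eq_map_poly => z /=; rewrite rmorph_int.
by rewrite Dp E dvdp_map -rt -E.
Qed.

Definition minZpoly (b : algC) : {poly int} := map_poly Num.floor (minCpoly b).

Section MinimalPolynomialZ.
Variable b : algC.
Hypothesis Ab : b \in Aint.

Lemma minZpolyC : pZtoC (minZpoly b) = minCpoly b.
Proof. exact: floorpK. Qed.

Lemma minZpoly_root : root (pZtoC (minZpoly b)) b.
Proof. by rewrite minZpolyC root_minCpoly. Qed.

Lemma minZpoly_monic : minZpoly b \is monic.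
Proof.
have := minCpoly_monic b; rewrite -minZpolyC !monicE lead_pZtoC.
by move/eqP => h; apply/eqP; apply: intrC_inj; rewrite h mulr1z.
Qed.

Lemma minZpoly_not_unit : minZpoly b \isn't a GRing.unit.
Proof.
rewrite poly_unitE negb_and -size_pZtoC minZpolyC.
by rewrite neq_ltn size_minCpoly orbT.
Qed.

(* Monic division by the minimal polynomial leaves no remainder. *)
Lemma minZpoly_dvd (f : {poly int}) : root (pZtoC f) b -> dvdZx (minZpoly b) f.
Proof.
move=> rf; have mM := minZpoly_monic.
have E := Pdiv.IdomainMonic.divp_eq mM f.
exists (f %/ minZpoly b); rewrite mulrC.
suff m0 : f %% minZpoly b = 0 by rewrite {1}E m0 addr0.
have hd : minCpoly b %| pZtoC (f %% minZpoly b).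
  have := minCpoly_dvd rf; rewrite {1}E rmorphD rmorphM /= minZpolyC.
  by rewrite dvdp_addr // dvdp_mull.
apply/eqP; rewrite -size_poly_eq0 -size_pZtoC size_poly_eq0.
apply/negP => /negP nz; have := dvdp_leq nz hd.
have := Pdiv.Idomain.ltn_modp f (minZpoly b); rewrite monic_neq0 // => lt.
by rewrite size_pZtoC -minZpolyC size_pZtoC leqNgt lt.
Qed.

(* In a factorisation of the minimal polynomial, the factor not vanishing at b
   is a unit: it has degree 0 by minimality, and a unit leading coefficient. *)
Lemma minZpoly_split_unit (a c : {poly int}) : minZpoly b = a * c ->
  root (pZtoC a) b -> c \is a GRing.unit.
Proof.
move=> E ra.
have nz : a * c != 0 by rewrite -E monic_neq0 // minZpoly_monic.
have a0 : a != 0 by apply: contraNneq nz => ->; rewrite mul0r.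
have c0 : c != 0 by apply: contraNneq nz => ->; rewrite mulr0.
have pa0 : pZtoC a != 0 by rewrite -size_poly_eq0 size_pZtoC size_poly_eq0.
have hle := dvdp_leq pa0 (minCpoly_dvd ra).
rewrite -minZpolyC !size_pZtoC E size_mul // in hle.
have ha : (0 < size a)%N by rewrite size_poly_gt0.
have hc : (0 < size c)%N by rewrite size_poly_gt0.
have hle' : ((size a + size c).-1 <= size a)%N := hle.
have sc : size c = 1%N by clear -hle' ha hc; lia.
rewrite poly_unitE sc eqxx /=.
have := minZpoly_monic; rewrite monicE E lead_coefM => /eqP lc.
have : lead_coef c \is a GRing.unit.
  by apply/unitrPr; exists (lead_coef a); rewrite mulrC lc.
by rewrite lead_coefE sc.
Qed.

Lemma minZpoly_irred : irredZx (minZpoly b).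
Proof.
split; first by rewrite monic_neq0 // minZpoly_monic.
split=> [|a c E]; first exact: minZpoly_not_unit.
move: minZpoly_root; rewrite E rmorphM /= /root hornerM mulf_eq0 => /orP[ra|rc].
  by right; exact: (minZpoly_split_unit E ra).
by left; apply: (minZpoly_split_unit (a := c) (c := a)); rewrite // mulrC.
Qed.

Lemma minZpoly_unique (q : {poly int}) : q \is monic -> irredZx q ->
  root (pZtoC q) b -> q = minZpoly b.
Proof.
move=> mq [_ [_ iq]] rq; have [r E] := minZpoly_dvd rq.
case: (iq _ _ E) => [uM|ur]; first by move: minZpoly_not_unit; rewrite uM.
move: ur; rewrite poly_unitE => /andP[/eqP sr _].
have Er : r = (r`_0)%:P by apply: size1_polyC; rewrite sr.
have := mq; rewrite monicE E lead_coefM (monicP minZpoly_monic) mul1r lead_coefE sr.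
by move=> /eqP r1; rewrite Er r1 mulr1.
Qed.

End MinimalPolynomialZ.

Lemma fib_monic n : (0 < n)%N -> fibpoly n \is monic.
Proof. by case: n => // n _; exact: (fib_size_monic n).2. Qed.

Lemma Aint_root_fib n x : (0 < n)%N -> root (fibC n) x -> x \in Aint.
Proof.
move=> n0 rx; apply: (root_monic_Aint rx).
  by rewrite monicE lead_pZtoC (monicP (fib_monic n0)) mulr1z.
by apply/polyOverP => i; rewrite coef_map intr_int.
Qed.

Lemma root_dvdZx (q f : {poly int}) x :
  dvdZx q f -> root (pZtoC q) x -> root (pZtoC f) x.
Proof.
by case=> r ->; rewrite rmorphM /= /root hornerM => /eqP->; rewrite mul0r.
Qed.

Lemma root_prod (R : idomainType) (I : Type) (S : seq I) (P : I -> {poly R}) x :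
  root (\prod_(i <- S) P i) x = has (fun i => root (P i) x) S.
Proof.
elim: S => [|i S IH]; first by rewrite big_nil /root hornerC oner_eq0.
by rewrite big_cons rootM IH.
Qed.

Lemma prod_dvdp (F : closedFieldType) (I : eqType) (l : seq I) (P : I -> {poly F})
    (g : {poly F}) : uniq l -> (forall i, i \in l -> P i %| g) ->
  (forall i j x, i \in l -> j \in l -> i != j -> root (P i) x -> ~~ root (P j) x) ->
  \prod_(i <- l) P i %| g.
Proof.
elim: l => [|i l IH] /=; first by rewrite big_nil dvd1p.
case/andP => il ul hd hc; rewrite big_cons Gauss_dvdp.
  rewrite hd ?mem_head //= IH // => [j jl|j k x jl kl].
    by rewrite hd // inE jl orbT.
  by apply: hc; rewrite inE ?jl ?kl orbT.
apply: Pdiv.ClosedField.root_coprimep => x rx; rewrite -rootE root_prod.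
apply/hasPn => j jl; apply: (hc i j x) => //; rewrite ?mem_head ?inE ?jl ?orbT //.
by apply: contraNneq il => ->.
Qed.

Definition newroots n : seq algC := [seq x <- rootsC (fibpoly n) | newroot n x].
Definition fib_factors n : seq {poly int} :=
  undup [seq minZpoly x | x <- newroots n].

Section Fibotomic.
Variable n : nat.
Hypothesis n2 : (2 <= n)%N.

Let n0 : (0 < n)%N. Proof. by apply: leq_trans n2. Qed.

Lemma fibotomic_factorP q x : q \is monic -> irredZx q -> dvdZx q (fibpoly n) ->
  (forall k, (1 <= k < n)%N -> ~ dvdZx q (fibpoly k)) -> root (pZtoC q) x ->
  [/\ x \in newroots n & q = minZpoly x].
Proof.
move=> mq iq dq nd rq.
have rn : root (fibC n) x by apply: root_dvdZx dq rq.
have Ax := Aint_root_fib n0 rn.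
have qE := minZpoly_unique Ax mq iq rq; split=> //.
rewrite mem_filter mem_rootsC ?fib_monic // rn /newroot rn andbT /=.
apply/forallP => k; apply/implyP => k0; apply/negP => rk.
have [r Er] := minZpoly_dvd Ax rk.
by apply: (nd k); [rewrite k0 ltn_ord | exists r; rewrite qE].
Qed.

Lemma newroots_root x : x \in newroots n -> root (fibC n) x.
Proof. by rewrite mem_filter => /andP[/andP[]]. Qed.

Lemma fib_factors_spec : fibotomic_factors n (fib_factors n).
Proof.
split=> [|q]; first exact: undup_uniq.
split.
  rewrite mem_undup => /mapP[x xN ->].
  have Ax := Aint_root_fib n0 (newroots_root xN).
  split; [exact: minZpoly_monic | exact: minZpoly_irred | exact: minZpoly_dvd
         (newroots_root xN) |].
  move=> k /andP[k1 k2] dk; have rk := root_dvdZx dk (minZpoly_root Ax).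
  by move: xN; rewrite mem_filter => /andP[/andP[_ /forallP/(_ (Ordinal k2))]];
    rewrite /= k1 rk.
case=> mq iq dq nd.
have : size (pZtoC q) != 1%N.
  rewrite size_pZtoC; apply: contraNneq (iq.2.1) => s1.
  have Eq : q = (q`_0)%:P by apply: size1_polyC; rewrite s1.
  by move: mq; rewrite monicE lead_coefE s1 /= => /eqP q1; rewrite Eq q1 unitr1.
case/closed_rootP => x rx; have [xN ->] := fibotomic_factorP mq iq dq nd rx.
by rewrite mem_undup map_f.
Qed.

Lemma fibotomic_prod : fibotomic n = \prod_(q <- fib_factors n) q.
Proof.
rewrite /fibotomic leqNgt n2 /=.
have [uE memE] := epsilon_spec (inhabits [::]) (fibotomic_factors n)
  (ex_intro _ _ fib_factors_spec).
have [uF memF] := fib_factors_spec.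
apply: perm_big; apply: uniq_perm => // q.
by apply/idP/idP => [/(memE q)/(memF q) | /(memF q)/(memE q)].
Qed.

Lemma fib_factors_root q x : q \in fib_factors n -> root (pZtoC q) x ->
  x \in newroots n /\ q = minZpoly x.
Proof.
move=> /(fib_factors_spec.2 q) [mq iq dq nd] rq.
by have [] := fibotomic_factorP mq iq dq nd rq.
Qed.

(* Distinct factors of Psi_n have no common root, so their product divides the
   squarefree polynomial F_n. *)
Lemma fib_factors_dvd :
  \prod_(q <- fib_factors n) pZtoC q %| \prod_(x <- rootsC (fibpoly n)) ('X - x%:P).
Proof.
rewrite -rootsC_monic ?fib_monic //; apply: prod_dvdp => [|q qF|i j x iF jF ij ri].
- exact: undup_uniq.
- have [_ _ [r ->] _] := (fib_factors_spec.2 q).1 qF.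
  by rewrite rmorphM /= dvdp_mulr.
- apply: contra ij => rj.
  by rewrite (fib_factors_root iF ri).2 (fib_factors_root jF rj).2.
Qed.

Lemma rootsC_fibotomic : perm_eq (rootsC (fibotomic n)) (newroots n).
Proof.
have mS : \prod_(q <- fib_factors n) q \is monic.
  by rewrite big_seq monic_prod // => q /(fib_factors_spec.2 q) [].
have [m hm] := dvdp_prod_XsubC fib_factors_dvd.
set R := rootsC (fibpoly n) in m hm.
have E : pZtoC (fibotomic n) = \prod_(x <- mask m R) ('X - x%:P).
  apply/eqP; rewrite -eqp_monic ?monic_prod_XsubC // fibotomic_prod rmorph_prod //.
  by rewrite monicE -rmorph_prod lead_pZtoC (monicP mS).
apply: (perm_trans (rootsC_perm _ E)); first by rewrite fibotomic_prod.
have uR : uniq R by rewrite /R; case: n n2 => // k _; exact: uniq_rootsC_fib.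
apply: uniq_perm; [exact: mask_uniq | exact: filter_uniq |] => x.
rewrite -root_prod_XsubC -E fibotomic_prod rmorph_prod root_prod.
apply/hasP/idP => [[q qF rq] | xN]; first exact: (fib_factors_root qF rq).1.
have Ax := Aint_root_fib n0 (newroots_root xN).
by exists (minZpoly x); [rewrite mem_undup map_f | exact: minZpoly_root].
Qed.

End Fibotomic.

Lemma fibotomic_rootsP k : (2 <= k)%N -> uniq (rootsC (fibotomic k)) /\
  forall a, (a \in rootsC (fibotomic k)) = fibprim k a.
Proof.
move=> k2; have P := rootsC_fibotomic k2.
have uR : uniq (rootsC (fibpoly k)).
  by case: k k2 {P} => // j _; exact: uniq_rootsC_fib.
split=> [|a]; first by rewrite (perm_uniq P) filter_uniq.
rewrite (perm_mem P) mem_filter -newroot_fibprim // andb_idr // => /andP[ra _].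
by rewrite mem_rootsC // fib_monic // ltnW.
Qed.

Lemma cyclotomic_rootsP k : (0 < k)%N -> uniq (rootsC 'Phi_k) /\
  forall u, (u \in rootsC 'Phi_k) = k.-primitive_root u.
Proof.
move=> k0; have [z pz] := C_prim_root_exists k0.
split=> [|u]; last first.
  by rewrite mem_rootsC ?Cyclotomic_monic // (Cintr_Cyclotomic pz) root_cyclotomic.
have P : perm_eq (rootsC 'Phi_k)
    [seq z ^+ i | i : 'I_k in [pred i : 'I_k | coprime i k]].
  apply: rootsC_perm; first exact: Cyclotomic_monic.
  by rewrite big_image (Cintr_Cyclotomic pz).
rewrite (perm_uniq P) map_inj_uniq ?enum_uniq // => i j /eqP.
by rewrite (eq_prim_root_expr pz) !modn_small // => /eqP; exact: val_inj.
Qed.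

Definition pairs (T U : Type) (f g : T -> U) (s : seq T) : seq U :=
  flatten [seq [:: f a; g a] | a <- s].

Lemma size_pairs (T U : Type) (f g : T -> U) (s : seq T) :
  size (pairs f g s) = (size s).*2.
Proof. by elim: s => //= a s; rewrite /pairs => ->; rewrite doubleS. Qed.

Lemma big_pairs (R : pzSemiRingType) (T U : Type) (f g : T -> U) (s : seq T)
    (F : U -> R) :
  \prod_(x <- pairs f g s) F x = \prod_(a <- s) (F (f a) * F (g a)).
Proof.
elim: s => [|a s IH]; first by rewrite /pairs /= !big_nil.
by rewrite /pairs /= !big_cons -/(pairs f g s) IH mulrA.
Qed.

Lemma mem_pairs (T U : eqType) (f g : T -> U) (s : seq T) x :
  reflect (exists2 a, a \in s & x = f a \/ x = g a) (x \in pairs f g s).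
Proof.
apply: (iffP flattenP) => [[l /mapP[a aL ->]]|[a aL h]].
  by rewrite !inE => /orP[/eqP|/eqP]; exists a => //; [left|right].
exists [:: f a; g a]; first exact: map_f.
by rewrite !inE; case: h => ->; rewrite eqxx ?orbT.
Qed.

Section Pairing.
Variables (T : eqType) (sg : T -> T) (s : seq T).
Hypotheses (us : uniq s) (sg_s : {in s, forall x, sg x \in s})
  (sgK : {in s, involutive sg}) (sg_neq : {in s, forall x, sg x != x}).

Lemma pairing : exists t, perm_eq s (pairs id sg t).
Proof.
move: {2}(size s) (leqnn (size s)) => N; elim: N s us sg_s sgK sg_neq => [|N IH].
  by case=> [|x s'] _ _ _ _ //; exists [::].
case=> [|x s']; first by exists [::].
move=> /andP[xs us'] hc hi hf /= sz.
have sxs : sg x \in s'.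
  have := hc x (mem_head _ _); rewrite inE => /orP[/eqP h|//].
  by have := hf x (mem_head _ _); rewrite h eqxx.
have ms2 y : (y \in rem (sg x) s') = (y != sg x) && (y \in s').
  by rewrite mem_rem_uniq.
have [t Ht] : exists t, perm_eq (rem (sg x) s') (pairs id sg t).
  apply: IH => [|y|y|y|]; first exact: rem_uniq.
  - rewrite ms2 => /andP[ysx ys]; have yxs : y \in x :: s' by rewrite inE ys orbT.
    rewrite ms2; apply/andP; split.
      apply: contraNneq xs => h.
      by have <- : y = x by rewrite -(hi y yxs) h hi ?mem_head.
    have := hc y yxs; rewrite inE => /orP[/eqP h|//].
    by move: ysx; rewrite -h hi ?mem_head ?eqxx.
  - by rewrite ms2 => /andP[_ ys]; apply: hi; rewrite inE ys orbT.
  - by rewrite ms2 => /andP[_ ys]; apply: hf; rewrite inE ys orbT.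
  - by rewrite size_rem //; move: sz; case: (size s') => //= k; lia.
exists (x :: t); rewrite /pairs /= perm_cons -/(pairs id sg t).
by apply: (perm_trans (perm_to_rem sxs)); rewrite perm_cons.
Qed.

Lemma pairing_even : ~~ odd (size s).
Proof. by have [t Ht] := pairing; rewrite (perm_size Ht) size_pairs odd_double. Qed.

Lemma pairing_ge0 (C : numClosedFieldType) (F : T -> C) :
  {in s, forall x, F (sg x) = (F x)^*} -> 0 <= \prod_(x <- s) F x.
Proof.
move=> hF; have [t Ht] := pairing.
rewrite (perm_big _ Ht) big_pairs big_seq; apply: prodr_ge0 => x xt.
have xs : x \in s by rewrite (perm_mem Ht); apply/mem_pairs; exists x => //; left.
by rewrite hF // mul_conjC_ge0.
Qed.

End Pairing.

Lemma pairs_uniq (T U : eqType) (f g : T -> U) (h : U -> T) (s : seq T) :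
  cancel f h -> cancel g h -> {in s, forall a, f a != g a} -> uniq s ->
  uniq (pairs f g s).
Proof.
move=> fK gK fg; elim: s fg => [|a s IH] //= fg /andP[as_ us].
have notin x : h x = a -> x \notin pairs f g s.
  move=> hx; apply: contra as_ => /mem_pairs[b bs [xE|xE]];
    by rewrite -hx xE ?fK ?gK.
rewrite /pairs /= -/(pairs f g s) inE negb_or fg ?mem_head //=.
rewrite !notin ?fK ?gK // IH // => b bs.
by apply: fg; rewrite inE bs orbT.
Qed.

Lemma prodN (R : comPzRingType) (T : Type) (l : seq T) (F : T -> R) :
  \prod_(x <- l) - F x = (-1) ^+ size l * \prod_(x <- l) F x.
Proof.
elim: l => [|x l IH]; first by rewrite !big_nil expr0 mulr1.
by rewrite !big_cons IH /= exprS; ring.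
Qed.


Lemma quad_root_sub (a v : algC) : v * (a - v) = -1 -> v - v^-1 = a.
Proof.
move=> h; have /andP[v0 _] := mulN1_neq0 h.
apply: (mulfI v0); rewrite mulrBr mulfV //.
apply/eqP; rewrite -subr_eq0.
have -> : v * v - 1 - v * a = - (v * (a - v)) - 1 by ring.
by rewrite h opprK subrr.
Qed.

(* All w with w - w^-1 in L: the lift of a list of roots of Psi_k. *)
Definition liftF (L : seq algC) : seq algC := pairs wroot wother L.

(* All v with -v^2 in Q: the lift of a list of roots of Phi_k. *)
Definition sqrtN (u : algC) : algC := sqrtC (- u).
Definition liftC (Q : seq algC) : seq algC := pairs sqrtN (fun u => - sqrtN u) Q.

Lemma sqrtNK u : - sqrtN u ^+ 2 = u.
Proof. by rewrite sqrtCK opprK. Qed.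

Lemma liftF_uniq k L : (2 <= k)%N -> uniq L -> {in L, forall a, fibprim k a} ->
  uniq (liftF L).
Proof.
move=> k2 uL hL; apply: (pairs_uniq (h := fun v => v - v^-1)) => // a.
- exact/quad_root_sub/wrootP.
- exact/quad_root_sub/wotherP.
move=> /hL pa; apply: contraTneq pa => E.
have -> : fibprim k a = k.-primitive_root (1 : algC).
  by rewrite /fibprim expr2 {2}E wrootP opprK.
apply/negP => /prim_order_dvd/(_ 1%N); rewrite expr1 eqxx => /dvdn_leq; lia.
Qed.

Lemma liftC_uniq k Q : uniq Q -> {in Q, forall u, k.-primitive_root u} ->
  uniq (liftC Q).
Proof.
move=> uQ hQ; apply: (pairs_uniq (h := fun v => - v ^+ 2)) => // u.
- exact: sqrtNK.
- by rewrite /= sqrrN sqrtNK.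
move=> /hQ/prim_root_neq0 u0; rewrite eq_sym eqNr.
by apply: contraNneq u0 => s0; rewrite -(sqrtNK u) s0 expr0n oppr0.
Qed.

Lemma liftF_mem k L : (forall a, (a \in L) = fibprim k a) ->
  forall v, (v \in liftF L) = k.-primitive_root (- v ^+ 2).
Proof.
move=> hL v; apply/mem_pairs/idP => [[a aL [->|->]] | pv].
- by rewrite hL in aL.
- by rewrite -(fibprimE _ (wotherP a)) -hL.
have v0 : v != 0.
  by apply: contraNneq (prim_root_neq0 pv) => ->; rewrite expr0n oppr0.
have hv : v * (v - v^-1 - v) = -1 by rewrite addrAC subrr add0r mulrN mulfV.
by exists (v - v^-1); [rewrite hL (fibprimE _ hv) | exact: wroot_cases].
Qed.

Lemma liftC_mem k Q : (forall u, (u \in Q) = k.-primitive_root u) ->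
  forall v, (v \in liftC Q) = k.-primitive_root (- v ^+ 2).
Proof.
move=> hQ v; apply/mem_pairs/idP => [[u uQ [->|->]] | pv].
- by rewrite sqrtNK -hQ.
- by rewrite sqrrN sqrtNK -hQ.
exists (- v ^+ 2); first by rewrite hQ.
have : sqrtN (- v ^+ 2) ^+ 2 == v ^+ 2 by rewrite /sqrtN opprK sqrtCK.
by rewrite eqf_sqr => /orP[/eqP -> | /eqP ->]; [left | right; rewrite opprK].
Qed.

(* Over the lift of cyclotomic roots, the double product is the square of
   the cyclotomic one: (s - t)(s + t)(-s - t)(-s + t) = (s^2 - t^2)^2. *)
Lemma prod_liftC Q1 Q2 :
  \prod_(x <- liftC Q1) \prod_(y <- liftC Q2) (x - y) =
  (\prod_(u <- Q1) \prod_(v <- Q2) (u - v)) ^+ 2.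
Proof.
rewrite big_pairs -prodrXl; apply: eq_bigr => u _.
rewrite !big_pairs -big_split -prodrXl /=; apply: eq_bigr => v _.
set s := sqrtN u; set t := sqrtN v.
have hs : s ^+ 2 = - u by rewrite sqrtCK.
have ht : t ^+ 2 = - v by rewrite sqrtCK.
have -> : (s - t) * (s - - t) * ((- s - t) * (- s - - t)) = (s ^+ 2 - t ^+ 2) ^+ 2.
  by ring.
by rewrite hs ht; ring.
Qed.

(* Over the lift of fibotomic roots, with w c = w' c' = -1 the four
   differences multiply to -(w + c - w' - c')^2. *)
Lemma prod_liftF L1 L2 :
  \prod_(x <- liftF L1) \prod_(y <- liftF L2) (x - y) =
  \prod_(a <- L1) \prod_(b <- L2) (- (a - b) ^+ 2).
Proof.
rewrite big_pairs; apply: eq_bigr => a _.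
rewrite !big_pairs -big_split /=; apply: eq_bigr => b _.
have wa := wrootP a; have wb := wrootP b; rewrite /wother.
set w := wroot a; set v := wroot b.
have e1 : (w - v) * (w - (b - v)) =
  w * (a - b) + (v * (b - v) - w * (a - w)) by ring.
have e2 : (a - w - v) * (a - w - (b - v)) =
  (a - w) * (a - b) + (v * (b - v) - w * (a - w)) by ring.
rewrite e1 e2 wa wb subrr !addr0.
have -> : w * (a - b) * ((a - w) * (a - b)) = (w * (a - w)) * (a - b) ^+ 2 by ring.
by rewrite wa mulN1r.
Qed.

Lemma liftC_liftF_perm k L Q : (2 <= k)%N -> uniq L -> uniq Q ->
  (forall a, (a \in L) = fibprim k a) ->
  (forall u, (u \in Q) = k.-primitive_root u) -> perm_eq (liftC Q) (liftF L).
Proof.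
move=> k2 uL uQ hL hQ; apply: uniq_perm => [||v].
- by apply: (@liftC_uniq k _ uQ) => u; rewrite hQ.
- by apply: (liftF_uniq k2 uL) => a; rewrite hL.
by rewrite (liftF_mem hL) (liftC_mem hQ).
Qed.

(* Squaring the resultants: computing the double product over the common
   lift in two ways gives res(Psi_m, Psi_n)^2 = res(Phi_m, Phi_n)^2, the sign
   (-1)^(size L1 * size L2) disappearing as size L2 is even. *)
Lemma res_sqr m n L1 L2 Q1 Q2 : (2 <= m)%N -> (2 <= n)%N ->
  uniq L1 -> uniq L2 -> uniq Q1 -> uniq Q2 ->
  (forall a, (a \in L1) = fibprim m a) -> (forall a, (a \in L2) = fibprim n a) ->
  (forall u, (u \in Q1) = m.-primitive_root u) ->
  (forall u, (u \in Q2) = n.-primitive_root u) -> ~~ odd (size L2) ->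
  (\prod_(a <- L1) \prod_(b <- L2) (a - b)) ^+ 2 =
  (\prod_(u <- Q1) \prod_(v <- Q2) (u - v)) ^+ 2.
Proof.
move=> m2 n2 uL1 uL2 uQ1 uQ2 hL1 hL2 hQ1 hQ2 ev.
rewrite -[RHS]prod_liftC (perm_big _ (liftC_liftF_perm m2 uL1 uQ1 hL1 hQ1)).
have P2 := liftC_liftF_perm n2 uL2 uQ2 hL2 hQ2.
rewrite [RHS](eq_bigr _ (fun x _ => perm_big _ P2)).
rewrite prod_liftF -prodrXl; apply: eq_bigr => a _.
by rewrite prodN -signr_odd (negbTE ev) expr0 mul1r -prodrXl.
Qed.

Lemma norm_root_unity (C : numClosedFieldType) k (z : C) :
  (0 < k)%N -> z ^+ k = 1 -> `|z| = 1.
Proof.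
move=> k0 zk; apply/eqP.
by rewrite -(pexpr_eq1 k0) ?normr_ge0 // -normrX zk normr1.
Qed.

Lemma conj_norm1 (C : numClosedFieldType) (z : C) : `|z| = 1 -> z^* = z^-1.
Proof. by move=> z1; rewrite invC_norm z1 expr1n invr1 mul1r. Qed.

Lemma prim_root_sqr_neq1 (R : nzRingType) k (u : R) : (3 <= k)%N ->
  k.-primitive_root u -> u ^+ 2 != 1.
Proof.
by move=> k3 pu; rewrite -(prim_order_dvd pu); apply/negP => /dvdn_leq; lia.
Qed.

Lemma prim_root_conj_neq k (v : algC) : (3 <= k)%N ->
  k.-primitive_root v -> v^* != v.
Proof.
move=> k3 pv.
have v1 : `|v| = 1 := norm_root_unity (prim_order_gt0 pv) (prim_expr_order pv).
rewrite (conj_norm1 v1).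
apply: contraNneq (prim_root_sqr_neq1 k3 pv) => vV.
by rewrite expr2 -{1}vV mulVf ?(prim_root_neq0 pv).
Qed.

Lemma fibprimN k a : fibprim k (- a) = fibprim k a.
Proof.
have h : - wroot a * (- a - - wroot a) = -1.
  by rewrite -opprD mulrNN wrootP.
by rewrite (fibprimE _ h) sqrrN.
Qed.

Lemma fibprim0 k : (3 <= k)%N -> ~~ fibprim k 0.
Proof.
move=> k3; have : - wroot 0 ^+ 2 = -1.
  by rewrite expr2 -mulrN -(sub0r (wroot 0)) wrootP.
rewrite /fibprim => ->; apply/negP => /(prim_root_sqr_neq1 k3).
by rewrite sqrrN expr1n eqxx.
Qed.

Lemma fibprim_conj k a : fibprim k a -> a^* = - a.
Proof.
move=> pa; set w := wroot a.
have u1 := norm_root_unity (prim_order_gt0 pa) (prim_expr_order pa).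
have w1 : `|w| = 1.
  apply/eqP; rewrite -(pexpr_eq1 (isT : (0 < 2)%N)) ?normr_ge0 //.
  by rewrite -normrX -normrN u1.
rewrite -(quad_root_sub (wrootP a)) -/w rmorphB fmorphV /= (conj_norm1 w1) invrK.
by rewrite opprB.
Qed.

Lemma prod_reindex_inv (R : comPzSemiRingType) (T : eqType) (f : T -> T)
    (l : seq T) (F : T -> R) :
  involutive f -> uniq l -> (forall x, (f x \in l) = (x \in l)) ->
  \prod_(x <- l) F x = \prod_(x <- l) F (f x).
Proof.
move=> fK ul hl; rewrite -(big_map f xpredT F); apply: perm_big.
apply: uniq_perm => //; first by rewrite map_inj_uniq //; exact: inv_inj.
move=> y; apply/idP/idP => [yl | /mapP[x xl ->]]; last by rewrite hl.
by apply/mapP; exists (f y); rewrite ?fK // hl.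
Qed.

Section Positivity.
Variables (m n : nat) (L1 L2 Q1 Q2 : seq algC).
Hypotheses (n3 : (3 <= n)%N) (uL1 : uniq L1) (uL2 : uniq L2).
Hypotheses (uQ1 : uniq Q1) (uQ2 : uniq Q2).
Hypotheses (hL1 : forall a, (a \in L1) = fibprim m a)
           (hL2 : forall a, (a \in L2) = fibprim n a).
Hypotheses (hQ1 : forall u, (u \in Q1) = m.-primitive_root u)
           (hQ2 : forall u, (u \in Q2) = n.-primitive_root u).

Let negL2 b : b \in L2 -> - b \in L2. Proof. by rewrite !hL2 fibprimN. Qed.

Let negL2_neq b : b \in L2 -> - b != b.
Proof. by rewrite eqNr hL2; apply: contraTneq => ->; exact: fibprim0. Qed.

Lemma size_fibotomic_even : ~~ odd (size L2).
Proof. by apply: (pairing_even uL2 negL2 _ negL2_neq) => b _; rewrite opprK. Qed.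

(* Grouping b with -b: prod_a (a + b) is the conjugate of prod_a (a - b),
   since conjugation is a -> -a on the roots of Psi_m. *)
Lemma res_fib_ge0 : 0 <= \prod_(a <- L1) \prod_(b <- L2) (a - b).
Proof.
rewrite exchange_big /=; apply: (pairing_ge0 uL2 negL2 _ negL2_neq) => [b _|b bL].
  by rewrite opprK.
have cb : b^* = - b by apply: (@fibprim_conj n); rewrite -hL2.
rewrite rmorph_prod (@prod_reindex_inv _ _ -%R L1) //=; last first.
- by move=> a; rewrite !hL1 fibprimN.
- exact: opprK.
rewrite big_seq [RHS]big_seq; apply: eq_bigr => a aL.
have ca : a^* = - a by apply: (@fibprim_conj m); rewrite -hL1.
by rewrite rmorphB /= ca cb.
Qed.

(* The primitive n-th roots of unity come in conjugate pairs {v, v^*}, and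
   grouping them gives a product of squared moduli. *)
Lemma res_cyc_ge0 : 0 <= \prod_(u <- Q1) \prod_(v <- Q2) (u - v).
Proof.
rewrite exchange_big /=; apply: (pairing_ge0 (sg := Num.conj)) => //.
- by move=> v; rewrite !hQ2 fmorph_primitive_root.
- by move=> v _; rewrite conjCK.
- by move=> v; rewrite hQ2; exact: prim_root_conj_neq.
move=> v _; rewrite rmorph_prod (@prod_reindex_inv _ _ Num.conj Q1) //=; last first.
- by move=> u; rewrite !hQ1 fmorph_primitive_root.
- exact: conjCK.
by apply: eq_bigr => u _; rewrite rmorphB.
Qed.
(* Both double products are nonnegative reals with equal squares. *)
Lemma res_fib_cyc : (2 <= m)%N ->
  \prod_(a <- L1) \prod_(b <- L2) (a - b) = \prod_(u <- Q1) \prod_(v <- Q2) (u - v).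
Proof.
move=> m2; apply/eqP; rewrite -(eqrXn2 (isT : (0 < 2)%N) res_fib_ge0 res_cyc_ge0).
apply/eqP; apply: (res_sqr m2 (ltnW n3)) size_fibotomic_even => //.
Qed.

End Positivity.

Theorem mainTheorem9 (m n : nat) :
  (2 <= m)%N -> (m < n)%N -> resC (fibotomic m) (fibotomic n) = resC 'Phi_m 'Phi_n.
Proof.
move=> m2 mn; have n3 : (3 <= n)%N by apply: leq_trans mn.
have [uL1 hL1] := fibotomic_rootsP m2.
have [uL2 hL2] := fibotomic_rootsP (ltnW n3).
have [uQ1 hQ1] := cyclotomic_rootsP (ltnW m2).
have [uQ2 hQ2] := cyclotomic_rootsP (ltnW (ltnW n3)).
exact: (res_fib_cyc n3 uL1 uL2 uQ1 uQ2 hL1 hL2 hQ1 hQ2 m2).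
Qed.
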